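(* Let $(X,d)$ be an $F$-space with non-decreasing metric $d$ and let $\mathcal{E}(x)=\{e_n(x)\}_{n=0}^\infty$ be a scale on $X$. The following are equivalent: (i) there exists $\{\varepsilon_n\}\searrow0$ such that $e_n(x)=\mathbf{O}(\varepsilon_n)$ for all $x\in X$; (ii) there exist $\{\varepsilon_n\}\searrow0$, $C>0$ and $r_0>0$ such that $e_n(x)\le C\varepsilon_n$ for all $n\in\mathbb{N}$ and all $x\in B(0,r_0)$. Consequently, the scale $\mathcal{E}$ satisfies Shapiro's theorem on $X$ if and only if $$\inf_{n\in\mathbb{N}}\ \sup_{x\in B(0,r)\cap X_{\mathcal{E}}}e_n(x)>0\quad\text{for all } r>0.$$
   Context: An $F$-space is a complete metric vector space with translation-invariant metric $d$; $d$ is non-decreasing if $d(\alpha x,0)\le d(x,0)$ for $0\le\alpha\le1$. Write $\|x\|=d(x,0)$ and $B(0,r)=\{x:d(x,0)\le r\}$. A map $\mathcal{E}:X\to\ell^\infty$, $\mathcal{E}(x)=\{e_n(x)\}_{n=0}^\infty$ with each $e_n:X\to[0,\infty)$, is a scale on $X$ if: (i) there is $C_1>0$ with $C_1\|x\|\ge e_n(x)\ge e_{n+1}(x)$ for all $x,n$, and each $e_n$ is continuous; (ii) there exist a strictly increasing $K:\mathbb{N}\to\mathbb{N}$ and $C_2>0$ with $e_{K(n)}(x+y)\le C_2(e_n(x)+e_n(y))$ for all $x,y,n$; (iii) there is $\phi:[0,\infty)\to[0,\infty)$ with $e_n(\lambda x)\le\phi(|\lambda|)e_n(x)$ for all scalars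 $\lambda$, and $e_n(-x)=e_n(x)$. $X_{\mathcal{E}}=\{x\in X:\mathcal{E}(x)\in c_0\}$. The scale $\mathcal{E}$ satisfies Shapiro's theorem if for every non-increasing sequence $\{\varepsilon_n\}\in c_0$ of nonnegative reals there exists $x\in X_{\mathcal{E}}$ with $e_n(x)\neq\mathbf{O}(\varepsilon_n)$. The notation $\{\varepsilon_n\}\searrow0$ means a non-increasing sequence of nonnegative reals converging to $0$. *)

From HB Require Import structures.
From mathcomp Require Import all_boot all_order all_algebra.
From mathcomp Require Import boolp classical_sets reals.
Set Implicit Arguments. Unset Strict Implicit. Unset Printing Implicit Defensive.
Import Order.TTheory GRing.Theory Num.Theory.
Local Open Scope ring_scope.
Local Open Scope classical_set_scope.

Section Defs.
Variables (R : realType) (X : lmodType R).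

Definition is_metric (d : X -> X -> R) : Prop :=
  [/\ forall x y, 0 <= d x y,
      forall x y, d x y = 0 <-> x = y,
      forall x y, d x y = d y x &
      forall x y z, d x z <= d x y + d y z].

(* F-space: complete metric vector space with translation-invariant metric;
   "metric vector space" = the vector operations are continuous for d
   (addition is automatically continuous by translation invariance;
   we require joint sequential continuity of scalar multiplication). *)
Definition Fspace (d : X -> X -> R) : Prop :=
  [/\ is_metric d,
      (forall x y z, d (x + z) (y + z) = d x y),
      (forall (l : nat -> R) (u : nat -> X) (l0 : R) (x0 : X),
          (forall eps, 0 < eps -> exists N, forall n, (N <= n)%N -> `|l n - l0| < eps) ->
          (forall eps, 0 < eps -> exists N, forall n, (N <= n)%N -> d (u n) x0 < eps) ->
          forall eps, 0 < eps -> exists N, forall n, (N <= n)%N ->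
            d (l n *: u n) (l0 *: x0) < eps) &
      (forall u : nat -> X,
          (forall eps, 0 < eps -> exists N, forall m n, (N <= m)%N -> (N <= n)%N ->
              d (u m) (u n) < eps) ->
          exists x0, forall eps, 0 < eps -> exists N, forall n, (N <= n)%N ->
              d (u n) x0 < eps)].

Definition Fnorm (d : X -> X -> R) (x : X) : R := d x 0.

Definition nondecreasing_metric (d : X -> X -> R) : Prop :=
  forall (a : R) (x : X), 0 <= a -> a <= 1 -> Fnorm d (a *: x) <= Fnorm d x.

Definition ball0 (d : X -> X -> R) (r : R) : set X := [set x | Fnorm d x <= r].

Definition dcontinuous (d : X -> X -> R) (f : X -> R) : Prop :=
  forall x eps, 0 < eps -> exists2 delta, 0 < delta &
    forall y, d y x < delta -> `|f y - f x| < eps.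

Definition is_scale (d : X -> X -> R) (e : nat -> X -> R) : Prop :=
  [/\ (forall n x, 0 <= e n x),
      (exists2 C1, 0 < C1 & forall x n, e n x <= C1 * Fnorm d x /\ e n.+1 x <= e n x),
      (forall n, dcontinuous d (e n)),
      (exists K : nat -> nat, exists2 C2, 0 < C2 &
         (forall m n, (m < n)%N -> (K m < K n)%N) /\
         (forall x y n, e (K n) (x + y) <= C2 * (e n x + e n y))) &
      (exists phi : R -> R,
         (forall t, 0 <= t -> 0 <= phi t) /\
         (forall (l : R) x n, e n (l *: x) <= phi `|l| * e n x) /\
         (forall x n, e n (- x) = e n x))].

Definition cvg0 (u : nat -> R) : Prop :=
  forall eps, 0 < eps -> exists N, forall n, (N <= n)%N -> `|u n| < eps.

Definition decr_to0 (eps : nat -> R) : Prop :=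
  (forall n, 0 <= eps n) /\ (forall n, eps n.+1 <= eps n) /\ cvg0 eps.

Definition bigO_seq (a b : nat -> R) : Prop :=
  exists C, exists N, forall n, (N <= n)%N -> `|a n| <= C * `|b n|.

Definition XE (e : nat -> X -> R) : set X := [set x | cvg0 (fun n => e n x)].

Definition Shapiro (e : nat -> X -> R) : Prop :=
  forall eps, decr_to0 eps ->
    exists2 x, XE e x & ~ bigO_seq (fun n => e n x) eps.

End Defs.

From HB Require Import structures.
From mathcomp Require Import all_boot all_order all_algebra.
From mathcomp Require Import boolp classical_sets reals.
From mathcomp Require Import lra.
Import Order.TTheory GRing.Theory Num.Theory.
Local Open Scope ring_scope.
Local Open Scope classical_set_scope.

(* (i) => (ii) is a Banach-Steinhaus argument.  The sets
   F_k = {x | e_n(x) <= k eps_n for n >= k} are closed, by continuity of the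
   e_n, and cover X, so by Baire's theorem one of them contains a ball
   B(x0, r).  The quasi-triangle inequality
   e_m(y) <= C2 (e_n(x0 + y) + e_n(-x0)) for m >= K(n) then bounds e_m on
   B(0, r/2) by 2 C2 k eps_n, so the suprema of e_n over B(0, r/2) decrease
   to 0 and can serve as the sequence in (ii).  Conversely x/(k+1) lies in
   B(0, r0) for large k, and e_n((k+1) y) <= phi(k+1) e_n(y).
   Both arguments also run inside X_E, a closed subspace: if the infimum
   vanishes for some r, the suprema over B(0, r) /\ X_E decrease to 0 and
   every x in X_E is O of them, so Shapiro's theorem fails; if Shapiro's
   theorem fails for {eps_n}, Baire's theorem in X_E forces these suprema to 0
   for some r. *)

Set Implicit Arguments. Unset Strict Implicit.

Section RealSequences.
Variable R : realType.

Lemma inv_nat_lt (eps : R) : 0 < eps ->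
  exists N, forall n, (N <= n)%N -> n.+1%:R^-1 < eps.
Proof.
move=> eps_gt0; have [k] := ltr_add_invr eps_gt0; rewrite add0r => k_lt.
exists k => n le_kn; apply: le_lt_trans k_lt.
by rewrite lef_pV2 ?posrE ?ltr0Sn // ler_nat.
Qed.

Lemma bigO_seq_le_nat_mul (a b : nat -> R) :
  (forall n, 0 <= a n) -> (forall n, 0 <= b n) -> bigO_seq a b ->
  exists k : nat, forall n, (k <= n)%N -> a n <= k%:R * b n.
Proof.
move=> a_ge0 b_ge0 [C [N aO]]; pose k := maxn N (Num.Def.archi_bound `|C|).
have C_le_k : C <= k%:R.
  apply: le_trans (ler_norm C) (ltW (lt_le_trans (archi_boundP (normr_ge0 C)) _)).
  by rewrite ler_nat leq_maxr.
exists k => n le_kn; have := aO n (leq_trans (leq_maxl _ _) le_kn).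
rewrite !ger0_norm // => /le_trans; apply; exact: ler_wpM2r.
Qed.

Lemma cvg0_of_eventually_le (s c : nat -> R) (C : R) (k : nat) :
  (forall n, 0 <= s n) -> 0 <= C -> cvg0 c ->
  (forall n, (k <= n)%N -> exists N, forall m, (N <= m)%N -> s m <= C * c n) ->
  cvg0 s.
Proof.
move=> s_ge0 C_ge0 c0 s_le eta eta_gt0.
have [N cN] := c0 (eta / (C + 1)) (divr_gt0 eta_gt0 (ltr_wpDl C_ge0 ltr01)).
have [M sM] := s_le (maxn N k) (leq_maxr _ _); exists M => m le_Mm.
have := cN _ (leq_maxl N k); rewrite ltr_pdivlMr ?ltr_wpDl // => c_lt.
have := sM m le_Mm; rewrite ger0_norm //; have := normr_ge0 (c (maxn N k)).
have := ler_norm (c (maxn N k)); move=> *; nra.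
Qed.

Lemma nonincreasing_cvg0_of_inf_le0 (s : nat -> R) :
  (forall n, 0 <= s n) -> (forall n, s n.+1 <= s n) ->
  inf [set s n | n in [set: nat]] <= 0 -> cvg0 s.
Proof.
move=> s_ge0 s_nonincr inf_le0 eta eta_gt0.
have s_range_neq0 : [set s n | n in [set: nat]] !=set0 by exists (s 0%N), 0%N.
have [_ [n _ <-] sn_lt] := inf_lt s_range_neq0 (le_lt_trans inf_le0 eta_gt0).
exists n => m le_nm; rewrite ger0_norm //; apply: le_lt_trans sn_lt.
exact: (Order.NatMonotonyTheory.nonincnP s_nonincr).
Qed.

End RealSequences.

Section MetricSpace.
Variables (R : realType) (X : lmodType R) (d : X -> X -> R).

Definition dcvg (u : nat -> X) (x : X) : Prop :=
  forall eps, 0 < eps -> exists N, forall n, (N <= n)%N -> d (u n) x < eps.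

Definition dcauchy (u : nat -> X) : Prop :=
  forall eps, 0 < eps -> exists N, forall m n, (N <= m)%N -> (N <= n)%N ->
    d (u m) (u n) < eps.

Definition dcomplete : Prop := forall u, dcauchy u -> exists x, dcvg u x.

Definition seq_closed (S : set X) : Prop :=
  forall u x, (forall n, S (u n)) -> dcvg u x -> S x.

Definition ball_closed (F : set X) : Prop :=
  forall y, ~ F y -> exists2 r, 0 < r & forall z, d z y < r -> ~ F z.

Hypothesis d_metric : is_metric d.

Lemma dxx x : d x x = 0.
Proof. by case: d_metric => _ d0 _ _; apply/d0. Qed.

Lemma dC x y : d x y = d y x.
Proof. by case: d_metric. Qed.

Lemma d_triangle x y z : d x z <= d x y + d y z.
Proof. by case: d_metric. Qed.

Lemma dcvg_dist_le u l y c N :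
  dcvg u l -> (forall n, (N <= n)%N -> d (u n) y <= c) -> d l y <= c.
Proof.
move=> ul uy; apply/ler_addgt0Pr => eta eta_gt0.
have [M uM] := ul eta eta_gt0; pose n := maxn M N.
have := uM n (leq_maxl _ _); have := uy n (leq_maxr _ _).
have := d_triangle l (u n) y; rewrite (dC l (u n)); lra.
Qed.

Section QuarterSteps.
Variables (x : nat -> X) (r : nat -> R).
Hypotheses (r_gt0 : forall k, 0 < r k) (r_quarter : forall k, r k.+1 <= r k / 4)
  (x_step : forall k, d (x k.+1) (x k) < r k / 4).

Lemma quarter_steps_dist n m : (n <= m)%N -> d (x m) (x n) <= r n / 3.
Proof.
move=> /subnKC <-; suff dist j : d (x (n + j)%N) (x n) <= r n / 3 - r (n + j)%N / 3.
  by apply: le_trans (dist _) _; have := r_gt0 (n + (m - n))%N; lra.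
elim: j => [|j IHj]; first by rewrite addn0 dxx subrr.
rewrite addnS; have := d_triangle (x (n + j).+1) (x (n + j)%N) (x n).
have := x_step (n + j)%N; have := r_quarter (n + j)%N; lra.
Qed.

Lemma quarter_radius_lt eps : 0 < eps -> exists N, r N < eps.
Proof.
move=> eps_gt0; have r_nat k : r k * k.+1%:R <= r 0%N.
  elim: k => [|k IHk]; first by rewrite mulr1.
  move: IHk; rewrite [k.+2%:R]mulrSr [k.+1%:R]mulrSr.
  have := r_quarter k; have := r_gt0 k; have := r_gt0 k.+1.
  have : (0 : R) <= k%:R by []; move=> *; nra.
have [N inv_lt] := inv_nat_lt (divr_gt0 eps_gt0 (r_gt0 0%N)); exists N.
have := inv_lt N (leqnn N); rewrite ltr_pdivlMr ?r_gt0 // mulrC; apply: le_lt_trans.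
by rewrite ler_pdivlMr ?ltr0Sn ?r_nat.
Qed.

Lemma quarter_steps_cauchy : dcauchy x.
Proof.
move=> eps eps_gt0; have [N rN] := quarter_radius_lt eps_gt0.
exists N => m n le_Nm le_Nn; have := quarter_steps_dist le_Nm.
have := quarter_steps_dist le_Nn; have := d_triangle (x m) (x N) (x n).
rewrite (dC (x N) (x n)); have := r_gt0 N; lra.
Qed.

End QuarterSteps.

Lemma ball_outside_closed (S F : set X) x r :
  ball_closed F -> ~ (forall y, S y -> d y x < r -> F y) ->
  exists y rho, [/\ S y, 0 < rho, rho <= r, d y x < r & forall z, d z y < rho -> ~ F z].
Proof.
move=> F_closed /existsNP [y] /not_implyP [Sy] /not_implyP [dyx] /F_closed [rho rho_gt0 avoid].
exists y, (Order.min rho r); split => //.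
- by rewrite lt_min rho_gt0; apply: le_lt_trans dyx; case: d_metric.
- by rewrite ge_min lexx orbT.
- by move=> z; rewrite lt_min => /andP [/avoid].
Qed.

Theorem baire (S : set X) (F : nat -> set X) x1 :
  dcomplete -> seq_closed S -> S x1 -> (forall x, S x -> exists k, F k x) ->
  (forall k, ball_closed (F k)) ->
  exists k x0 r, [/\ S x0, 0 < r & forall y, S y -> d y x0 < r -> F k y].
Proof.
move=> complete S_closed Sx1 S_cover F_closed; apply: contrapT => no_ball.
(* [step] is made total for [choice]; its junk value on pairs outside
   [S * (0, +oo)] is never reached by the sequence [p] below. *)
have step (kp : nat * (X * R)) : exists q : X * R, S kp.2.1 -> 0 < kp.2.2 ->
    [/\ S q.1, 0 < q.2, q.2 <= kp.2.2 / 4, d q.1 kp.2.1 < kp.2.2 / 4 &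
        forall z, d z q.1 < q.2 -> ~ F kp.1 z].
  case: kp => k [x r] /=; have [[Sx r_gt0]|not_start] := pselect (S x /\ 0 < r); last first.
    by exists (x, r) => Sx r_gt0; exfalso; apply: not_start.
  have [|y [rho [? ? ? ? ?]]] := @ball_outside_closed S _ x (r / 4) (F_closed k).
    by move=> in_F; apply: no_ball; exists k, x, (r / 4); split; rewrite ?divr_gt0.
  by exists (y, rho).
have [next next_spec] := choice step.
pose p := fix p (k : nat) : X * R := if k is k'.+1 then next (k', p k') else (x1, 1).
have p_inv k : S (p k).1 /\ 0 < (p k).2.
  by elim: k => [|k [? ?]] //; case: (next_spec (k, p k)).
have p_step k : [/\ S (p k.+1).1, 0 < (p k.+1).2, (p k.+1).2 <= (p k).2 / 4,
    d (p k.+1).1 (p k).1 < (p k).2 / 4 & forall z, d z (p k.+1).1 < (p k.+1).2 -> ~ F k z].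
  by case: (p_inv k) => ? ?; apply: (next_spec (k, p k)).
pose x k := (p k).1; pose r k := (p k).2.
have r_gt0 k : 0 < r k by case: (p_inv k).
have r_quarter k : r k.+1 <= r k / 4 by case: (p_step k).
have x_step k : d (x k.+1) (x k) < r k / 4 by case: (p_step k).
have [l xl] := complete _ (quarter_steps_cauchy r_gt0 r_quarter x_step).
have Sl : S l by apply: (S_closed x) xl => k; case: (p_inv k).
have [k Fkl] := S_cover l Sl; case: (p_step k) => _ _ _ _; apply; last exact: Fkl.
have := dcvg_dist_le xl (quarter_steps_dist r_gt0 r_quarter x_step (n := k.+1)).
by have := r_gt0 k.+1; rewrite -/(x _) -/(r _); lra.
Qed.

End MetricSpace.

Section FSpace.
Variables (R : realType) (X : lmodType R) (d : X -> X -> R).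
Hypothesis d_F : Fspace d.

Let d_metric : is_metric d. Proof. by case: d_F. Qed.

Lemma Fspace_complete : dcomplete d.
Proof. by case: d_F. Qed.

Lemma d_Fnorm x y : d x y = Fnorm d (x - y).
Proof. by case: d_F => _ d_translate _ _; rewrite /Fnorm -(d_translate x y (- y)) subrr. Qed.

Lemma ball0_0 r : 0 <= r -> ball0 d r 0.
Proof. by rewrite /ball0 /Fnorm /= (dxx d_metric). Qed.

Lemma Fnorm_inv_nat_scale_le x r : 0 < r -> exists k : nat, Fnorm d (k.+1%:R^-1 *: x) <= r.
Proof.
case: d_F => _ _ scale_cont _ r_gt0.
have inv_cvg0 (eps : R) : 0 < eps -> exists N, forall n, (N <= n)%N -> `|n.+1%:R^-1 - 0| < eps.
  move=> eps_gt0; have [N inv_lt] := inv_nat_lt eps_gt0; exists N => n le_Nn.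
  by rewrite subr0 ger0_norm ?invr_ge0 // inv_lt.
have const_cvg (eps : R) : 0 < eps -> exists N, forall n : nat, (N <= n)%N -> d x x < eps.
  by move=> eps_gt0; exists 0%N => n _; rewrite (dxx d_metric).
have [N small] := scale_cont _ _ _ _ inv_cvg0 const_cvg r r_gt0.
by exists N; apply/ltW; have := small N (leqnn N); rewrite scale0r.
Qed.

Section Scale.
Variable e : nat -> X -> R.
Hypothesis e_scale : is_scale d e.

Lemma scale_ge0 n x : 0 <= e n x.
Proof. by case: e_scale. Qed.

Lemma scale_le_Fnorm : exists2 C1, 0 < C1 & forall n x, e n x <= C1 * Fnorm d x.
Proof. by case: e_scale => _ [C1 C1_gt0 e_le] _ _ _; exists C1 => // n x; case: (e_le x n). Qed.

Lemma scale_nonincr x m n : (m <= n)%N -> e n x <= e m x.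
Proof.
apply: (Order.NatMonotonyTheory.nonincnP (f := e^~ x)) => k.
by case: e_scale => _ [C1 _ e_le] _ _ _; case: (e_le x k).
Qed.

Lemma scale0 n : e n 0 = 0.
Proof.
have [C1 _ e_le] := scale_le_Fnorm; apply/eqP; rewrite eq_le scale_ge0 andbT.
by apply: le_trans (e_le n 0) _; rewrite /Fnorm (dxx d_metric) mulr0.
Qed.

Lemma scale_opp n x : e n (- x) = e n x.
Proof. by case: e_scale => _ _ _ _ [phi [_ [_ e_opp]]]. Qed.

Lemma scale_add_le : exists K C2, 0 < C2 /\
  forall n m x y, (K n <= m)%N -> e m (x + y) <= C2 * (e n x + e n y).
Proof.
case: e_scale => _ _ _ [K [C2 C2_gt0 [_ e_add]]] _.
by exists K, C2; split => // n m x y /(scale_nonincr (x + y)) /le_trans; apply.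
Qed.

Lemma scale_scale_le l : exists2 c, 0 <= c & forall n x, e n (l *: x) <= c * e n x.
Proof.
case: e_scale => _ _ _ _ [phi [phi_ge0 [e_scale_le _]]].
by exists (phi `|l|) => //; apply: phi_ge0.
Qed.

Lemma scale_continuous n : dcontinuous d (e n).
Proof. by case: e_scale. Qed.

Lemma XE0 : XE e 0.
Proof. by move=> eta eta_gt0; exists 0%N => n _; rewrite scale0 normr0. Qed.

Lemma XE_add x y : XE e x -> XE e y -> XE e (x + y).
Proof.
move=> ex0 ey0 eta eta_gt0; have [K [C2 [C2_gt0 e_add]]] := scale_add_le.
have eta'_gt0 : 0 < eta / (2 * C2) by rewrite divr_gt0 ?mulr_gt0.
have [N1 ex_lt] := ex0 _ eta'_gt0; have [N2 ey_lt] := ey0 _ eta'_gt0.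
exists (K (maxn N1 N2)) => m le_Km; rewrite ger0_norm ?scale_ge0 //.
apply: le_lt_trans (e_add _ _ x y le_Km) _.
have := ex_lt _ (leq_maxl N1 N2); have := ey_lt _ (leq_maxr N1 N2).
rewrite !ger0_norm ?scale_ge0 // !ltr_pdivlMr ?mulr_gt0 //; nra.
Qed.

Lemma XE_sub x y : XE e x -> XE e y -> XE e (x - y).
Proof.
move=> ex0 ey0; apply: XE_add => // eta /ey0 [N ey_lt].
by exists N => n /ey_lt; rewrite scale_opp.
Qed.

Lemma XE_scale l x : XE e x -> XE e (l *: x).
Proof.
move=> ex0 eta eta_gt0; have [c c_ge0 e_le] := scale_scale_le l.
have [N ex_lt] := ex0 _ (divr_gt0 eta_gt0 (ltr_wpDl c_ge0 ltr01)).
exists N => n le_Nn; rewrite ger0_norm ?scale_ge0 //; apply: le_lt_trans (e_le n x) _.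
have := ex_lt n le_Nn; rewrite ger0_norm ?scale_ge0 // ltr_pdivlMr ?ltr_wpDl //.
have := scale_ge0 n x; nra.
Qed.

Lemma XE_seq_closed : seq_closed d (XE e).
Proof.
move=> u x XEu ux eta eta_gt0.
have [C1 C1_gt0 e_le] := scale_le_Fnorm; have [K [C2 [C2_gt0 e_add]]] := scale_add_le.
have eta'_gt0 : 0 < eta / (2 * C2) by rewrite divr_gt0 ?mulr_gt0.
have [N uN] := ux _ (divr_gt0 eta'_gt0 C1_gt0); have [M euN] := XEu N _ eta'_gt0.
exists (K M) => m le_Km; rewrite ger0_norm ?scale_ge0 // -(subrK (u N) x).
apply: le_lt_trans (e_add _ _ _ _ le_Km) _.
have := e_le M (x - u N); rewrite -d_Fnorm dC //; have := uN N (leqnn N).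
have := euN M (leqnn M); rewrite ger0_norm ?scale_ge0 // !ltr_pdivlMr ?mulr_gt0 //.
have := scale_ge0 M (x - u N); have := scale_ge0 M (u N); nra.
Qed.

Definition sup_ball (S : set X) (r : R) (n : nat) : R :=
  sup [set e n x | x in ball0 d r `&` S].

Section SupBall.
Variables (S : set X) (r : R).
Hypotheses (S0 : S 0) (r_ge0 : 0 <= r).

Lemma sup_ball_has_sup n : has_sup [set e n x | x in ball0 d r `&` S].
Proof.
split; first by exists (e n 0), 0 => //; split => //; apply: ball0_0.
have [C1 C1_gt0 e_le] := scale_le_Fnorm.
by exists (C1 * r) => _ [y [y_ball _] <-]; apply: le_trans (e_le n y) _; rewrite ler_pM2l.
Qed.

Lemma sup_ball_ub n y : ball0 d r y -> S y -> e n y <= sup_ball S r n.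
Proof. by move=> y_ball Sy; apply: sup_upper_bound (sup_ball_has_sup n) _ _; exists y. Qed.

Lemma sup_ball_le n b : (forall y, ball0 d r y -> S y -> e n y <= b) -> sup_ball S r n <= b.
Proof.
move=> e_le; apply: ge_sup; first by case: (sup_ball_has_sup n).
by move=> _ [y [y_ball Sy] <-]; apply: e_le.
Qed.

Lemma sup_ball_ge0 n : 0 <= sup_ball S r n.
Proof. by rewrite -(scale0 n); apply: sup_ball_ub => //; apply: ball0_0. Qed.

Lemma sup_ball_nonincr n : sup_ball S r n.+1 <= sup_ball S r n.
Proof.
apply: sup_ball_le => y y_ball Sy; apply: le_trans (sup_ball_ub n y_ball Sy).
exact: scale_nonincr.
Qed.

End SupBall.

Lemma bigO_of_ball_le (S : set X) (s : nat -> R) r x :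
  0 < r -> (forall n, 0 <= s n) -> (forall l y, S y -> S (l *: y)) -> S x ->
  (forall n y, ball0 d r y -> S y -> e n y <= s n) -> bigO_seq (fun n => e n x) s.
Proof.
move=> r_gt0 s_ge0 S_scale Sx e_le; have [k x_ball] := Fnorm_inv_nat_scale_le x r_gt0.
have [c c_ge0 e_scale_le] := scale_scale_le k.+1%:R.
exists c, 0%N => n _; rewrite !ger0_norm ?scale_ge0 //.
have -> : x = k.+1%:R *: (k.+1%:R^-1 *: x) by rewrite scalerA mulfV ?scale1r // pnatr_eq0.
apply: le_trans (e_scale_le _ _) _; apply: ler_wpM2l => //.
exact: e_le x_ball (S_scale _ _ Sx).
Qed.

Definition scale_level (c : nat -> R) (k : nat) : set X :=
  [set x | forall n, (k <= n)%N -> e n x <= k%:R * c n].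

Lemma scale_level_ball_closed c k : ball_closed d (scale_level c k).
Proof.
move=> y /existsNP [n] /not_implyP [le_kn] /negP; rewrite -ltNge -subr_gt0 => gap_gt0.
have [r r_gt0 e_near] := scale_continuous n y gap_gt0; exists r => // z /e_near.
by rewrite ltr_norml => /andP [e_gt _] z_level; have := z_level n le_kn; lra.
Qed.

Lemma sup_ball_cvg0 (S : set X) eps :
  S 0 -> (forall x y, S x -> S y -> S (x - y)) -> seq_closed d S -> decr_to0 eps ->
  (forall x, S x -> bigO_seq (fun n => e n x) eps) ->
  exists2 r, 0 < r & cvg0 (sup_ball S r).
Proof.
move=> S0 S_sub S_closed [eps_ge0 [_ eps0]] S_bigO.
have S_cover x : S x -> exists k, scale_level eps k x.
  by move=> Sx; apply: bigO_seq_le_nat_mul (S_bigO x Sx) => // n; apply: scale_ge0.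
have [k [x0 [r [Sx0 r_gt0 x0_level]]]] :=
  baire d_metric Fspace_complete S_closed S0 S_cover (@scale_level_ball_closed eps).
have [K [C2 [C2_gt0 e_add]]] := scale_add_le.
have r2_ge0 : 0 <= r / 2 by rewrite divr_ge0 // ltW.
exists (r / 2); first by rewrite divr_gt0.
have C_ge0 : 0 <= 2 * C2 * k%:R by rewrite !mulr_ge0 // ltW.
apply: (cvg0_of_eventually_le (k := k) (sup_ball_ge0 S0 r2_ge0) C_ge0 eps0).
move=> n le_kn; exists (K n) => m le_Km; apply: sup_ball_le => // y y_ball Sy.
have Sx0y : S (x0 + y) by rewrite -[y]opprK -[- y]sub0r; apply/S_sub/S_sub.
have x0y_near : d (x0 + y) x0 < r.
  by rewrite d_Fnorm addrC addKr; apply: le_lt_trans y_ball _; lra.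
rewrite -[y](addKr x0); apply: le_trans (e_add _ _ _ _ le_Km) _; rewrite scale_opp.
have := x0_level x0 Sx0 (ltac:(by rewrite (dxx d_metric))) n le_kn.
have := x0_level _ Sx0y x0y_near n le_kn; have := eps_ge0 n; nra.
Qed.

Lemma bigO_all_iff_uniform_on_ball :
  (exists eps, decr_to0 eps /\ forall x : X, bigO_seq (fun n => e n x) eps) <->
  (exists eps, decr_to0 eps /\ exists C, 0 < C /\ exists r0, 0 < r0 /\
      forall n x, ball0 d r0 x -> e n x <= C * eps n).
Proof.
split.
- move=> [eps [eps_decr bigO_all]].
  have [r r_gt0 sup0] := @sup_ball_cvg0 setT eps I (fun _ _ _ _ => I) (fun _ _ _ _ => I)
    eps_decr (fun x _ => bigO_all x).
  have r_ge0 := ltW r_gt0; exists (sup_ball setT r); split.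
    by split; [|split]; [exact: sup_ball_ge0|exact: sup_ball_nonincr|].
  by exists 1; split => //; exists r; split => // n x x_ball; rewrite mul1r; apply: sup_ball_ub.
- move=> [eps [eps_decr [C [C_gt0 [r0 [r0_gt0 e_le]]]]]]; exists eps; split => // x.
  have C_eps_ge0 n : 0 <= C * eps n by rewrite mulr_ge0 ?(ltW C_gt0) //; case: eps_decr.
  have [c [N cO]] := @bigO_of_ball_le setT _ r0 x r0_gt0 C_eps_ge0 (fun _ _ _ => I) I
    (fun n y y_ball _ => e_le n y y_ball).
  exists (c * C), N => n le_Nn; have := cO n le_Nn.
  by rewrite normrM (ger0_norm (ltW C_gt0)) mulrA.
Qed.

Lemma Shapiro_iff_inf_sup_ball_gt0 :
  Shapiro e <-> forall r, 0 < r -> 0 < inf [set sup_ball (XE e) r n | n in [set: nat]].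
Proof.
split.
- move=> shapiro r r_gt0; rewrite ltNge; apply/negP => inf_le0; have r_ge0 := ltW r_gt0.
  have sup_ge0 := sup_ball_ge0 XE0 r_ge0; have sup_nonincr := sup_ball_nonincr XE0 r_ge0.
  have sup_decr : decr_to0 (sup_ball (XE e) r).
    by split; [|split]; last exact: nonincreasing_cvg0_of_inf_le0.
  have [x XEx] := shapiro _ sup_decr; apply.
  apply: bigO_of_ball_le r_gt0 sup_ge0 _ XEx _; first by move=> l y; apply: XE_scale.
  by move=> n y; apply: sup_ball_ub XE0 r_ge0 n y.
- move=> inf_gt0 eps eps_decr; apply: contrapT => no_witness.
  have bigO_XE x : XE e x -> bigO_seq (fun n => e n x) eps.
    by move=> XEx; apply: contrapT => not_bigO; apply: no_witness; exists x.
  have [r r_gt0 sup0] := sup_ball_cvg0 XE0 XE_sub XE_seq_closed eps_decr bigO_XE.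
  have sup_ge0 := sup_ball_ge0 XE0 (ltW r_gt0).
  have [n sup_small] := sup0 _ (inf_gt0 r r_gt0).
  have : inf [set sup_ball (XE e) r m | m in [set: nat]] <= sup_ball (XE e) r n.
    by apply: ge_inf; [exists 0 => _ [m _ <-]|exists n].
  by have := sup_small n (leqnn n); rewrite ger0_norm //; lra.
Qed.

End Scale.
End FSpace.

Unset Implicit Arguments. Set Strict Implicit.

Theorem mainTheorem7 (R : realType) (X : lmodType R) (d : X -> X -> R)
    (e : nat -> X -> R) :
  Fspace d -> nondecreasing_metric d -> is_scale d e ->
  ((exists eps, decr_to0 eps /\ forall x : X, bigO_seq (fun n => e n x) eps) <->
   (exists eps, decr_to0 eps /\ exists C, 0 < C /\ exists r0, 0 < r0 /\
      forall n x, ball0 d r0 x -> e n x <= C * eps n))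
  /\
  (Shapiro e <->
   forall r, 0 < r ->
     0 < inf [set sup [set e n x | x in ball0 d r `&` XE e] | n in [set: nat]]).
Proof.
move=> d_F _ e_scale; split.
- exact: bigO_all_iff_uniform_on_ball.
- exact: Shapiro_iff_inf_sup_ball_gt0.
Qed.
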